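(* Let $B$ be an abelian group equipped with an infinite family of group homomorphisms $r_v\colon B\to B_v$ (indexed by primes $v$ of good reduction) into finite abelian groups $B_v$. Fix an integer $n\ge 4$ and let $P\in B$ be a point of infinite order. For integers $x_1,\dots,x_n$ put $f(x_1,\dots,x_n)=(2x_1^2+x_2^2+x_3^2+x_4^2+\dots+x_n^2)P\in B$. Then $f(x_1,\dots,x_n)=0$ if and only if $(x_1,\dots,x_n)=(0,\dots,0)$; but for every prime $v$ of good reduction (i.e. every index $v$ of the family) there exist integers $x_1,\dots,x_n$ with $\gcd(x_1,\dots,x_n)=1$ such that $r_v\big((2x_1^2+x_2^2+x_3^2+x_4^2+\dots+x_n^2)P\big)=0$.
   Context: $B_v$ finite abelian groups, so every element of $B$ has finite order modulo $v$, i.e. $r_v(P)$ has finite order in $B_v$. In the intended applications (e.g. Mordell–Weil groups, $S$-units, odd $K$-groups over number fields) the maps $r_v$ are reduction maps at primes of good reduction. *)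

From HB Require Import structures.
From mathcomp Require Import all_boot all_order all_algebra.
Set Implicit Arguments. Unset Strict Implicit. Unset Printing Implicit Defensive.
Import Order.TTheory GRing.Theory Num.Theory.
Local Open Scope ring_scope.

(* The integer quadratic form 2 x_1^2 + x_2^2 + ... + x_n^2, with the
   variables x_1, ..., x_n indexed by 'I_n (x_1 is the entry at index 0). *)
Definition qform (n : nat) (x : 'I_n -> int) : int :=
  \sum_(i < n) (if val i == 0%N then 2 else 1) * x i ^+ 2.

Definition gcd_all (n : nat) (x : 'I_n -> int) : int :=
  \big[gcdz/0]_(i < n) x i.

From HB Require Import structures.
From mathcomp Require Import all_boot all_order all_algebra all_fingroup zify ring.
Import Order.TTheory GRing.Theory Num.Theory.
Set Implicit Arguments.
Unset Strict Implicit.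
Unset Printing Implicit Defensive.

(* The form is positive definite and [P] has infinite order, so [f x = 0] only at
   [x = 0].  Modulo [v], [r_v P] has a finite order [N], so it suffices to find a
   primitive [x] with [N | qform x]; with [x = (1, a, b, c, 0, ..., 0)] we need
   [N | 2 + a^2 + b^2 + c^2].  By the Chinese remainder theorem it is enough to treat
   prime powers: for odd [p] a pigeonhole argument solves [a^2 + b^2 + 2 = 0 (mod p)]
   with [p] not dividing [a], and Hensel's lemma lifts [a]; for [p = 2] take [b = 2],
   [c = 1] and lift a square root of [-7] modulo powers of [2]. *)

Lemma dvdn_pow_lift (p j : nat) (ok : pred nat) (f : nat -> nat) a :
    (forall k a, ok a -> p ^ (k + j) %| f a ->
       exists2 a', ok a' & p ^ (k + j).+1 %| f a') ->
  ok a -> p ^ j %| f a -> forall k, exists a, p ^ k %| f a.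
Proof.
move=> lift oka dvd_a k.
suff [a' _ dvd_a'] : exists2 a', ok a' & p ^ (k + j) %| f a'.
  by exists a'; apply: dvdn_trans dvd_a'; rewrite dvdn_exp2l ?leq_addr.
elim: k => [|k [a' oka' dvd_a']]; first by exists a.
by rewrite addSn; apply: lift oka' dvd_a'.
Qed.

Lemma sqr_add_lift_odd p d k a : prime p -> odd p -> ~~ (p %| a) ->
  p ^ k.+1 %| a ^ 2 + d -> exists2 a', ~~ (p %| a') & p ^ k.+2 %| a' ^ 2 + d.
Proof.
move=> p_pr p_odd p_ndvd_a /dvdnP[q def_q].
have p_ndvd_2 : ~~ (p %| 2).
  by rewrite dvdn_prime2 //; apply: contraL p_odd => /eqP->.
(* Newton step: [u] is [-(2a)^-1] modulo [p]. *)
have [u _] := Bezoutl (2 * a) (prime_gt0 p_pr).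
have /eqnP-> : coprime p (2 * a).
  by rewrite prime_coprime // Euclid_dvdM // negb_or p_ndvd_2.
move=> /dvdnP[w def_w].
exists (a + q * u * p ^ k.+1); first by rewrite dvdn_addl // dvdn_mull // dvdn_exp.
apply/dvdnP; exists (q * w + (q * u) ^ 2 * p ^ k).
have -> : (a + q * u * p ^ k.+1) ^ 2 + d
        = q * (1 + u * (2 * a)) * p ^ k.+1 + (q * u) ^ 2 * p ^ k.+1 * p ^ k.+1.
  transitivity (a ^ 2 + d + q * u * (2 * a) * p ^ k.+1
                + (q * u) ^ 2 * p ^ k.+1 * p ^ k.+1); first ring.
  by rewrite def_q; ring.
by rewrite def_w !expnS; ring.
Qed.

Lemma sqr_add_lift_two d k a : odd a ->
  2 ^ k.+3 %| a ^ 2 + d -> exists2 a', odd a' & 2 ^ k.+4 %| a' ^ 2 + d.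
Proof.
move=> a_odd /dvdnP[q def_q].
have [q_odd|q_even] := boolP (odd q); last first.
  by exists a => //; rewrite def_q expnS dvdn_pmul2r ?expn_gt0 // dvdn2.
(* Shifting [a] by [2^(k+2)] adds [a * 2^(k+3)] modulo [2^(k+4)], and [q + a] is even. *)
exists (a + 2 ^ k.+2); first by rewrite oddD a_odd expnS oddM.
have -> : (a + 2 ^ k.+2) ^ 2 + d = (q + a + 2 ^ k.+1) * 2 ^ k.+3.
  by transitivity (a ^ 2 + d + a * 2 ^ k.+3 + 2 ^ k.+1 * 2 ^ k.+3);
    [rewrite !expnS; ring | rewrite def_q; ring].
by rewrite expnS dvdn_pmul2r ?expn_gt0 // dvdn2 !oddD q_odd a_odd expnS oddM.
Qed.

Lemma sqr_mod_inj p x y : prime p -> odd p -> x <= p./2 -> y <= p./2 ->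
  x ^ 2 = y ^ 2 %[mod p] -> x = y.
Proof.
move=> p_pr p_odd.
have half_lt : p./2 + p./2 < p by have := odd_double_half p; rewrite p_odd -addnn; lia.
wlog le_yx : x y / y <= x.
  move=> sym le_xh le_yh eq_sq; have [le_yx|/ltnW le_xy] := leqP y x; first exact: sym.
  by symmetry; apply: sym.
move=> le_xh le_yh /eqP; rewrite eqn_mod_dvd ?leq_exp2r // subn_sqr Euclid_dvdM //.
case/orP=> /dvdn_leq le_p.
  by case: (posnP (x - y)) => [|/le_p]; lia.
by case: (posnP (x + y)) => [|/le_p]; lia.
Qed.

(* Pigeonhole: [a^2] and [-1 - d - b^2] each take [(p+1)/2] distinct values modulo [p]. *)
Lemma exists_sqr_add_sqr_dvd p d : prime p -> odd p ->
  exists a b, p %| a ^ 2 + b ^ 2 + d.+1.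
Proof.
move=> p_pr p_odd; have p_gt0 := prime_gt0 p_pr.
have p_eq : (p./2 + p./2).+1 = p by have := odd_double_half p; rewrite p_odd -addnn; lia.
have half_le (x : 'I_(p./2).+1) : x <= p./2 by rewrite -ltnS.
pose f (a : 'I_(p./2).+1) : 'I_p := Ordinal (ltn_pmod (a ^ 2) p_gt0).
have gP (b : 'I_(p./2).+1) : p.-1 - (b ^ 2 + d) %% p < p by lia.
pose g (b : 'I_(p./2).+1) : 'I_p := Ordinal (gP b).
have f_inj : injective f.
  move=> a a' /(congr1 val) eq_f; apply: val_inj.
  by apply: (sqr_mod_inj p_pr p_odd); rewrite ?half_le.
have g_inj : injective g.
  move=> b b' /(congr1 val) /= eq_g; apply: val_inj.
  apply: (sqr_mod_inj p_pr p_odd); rewrite ?half_le //.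
  apply/eqP; rewrite -(eqn_modDr d); apply/eqP.
  by have := ltn_pmod (b ^ 2 + d) p_gt0; have := ltn_pmod (b' ^ 2 + d) p_gt0; lia.
have : 0 < #|f @: setT :&: g @: setT|.
  have := cardsUI (f @: setT) (g @: setT); rewrite !card_imset // cardsT card_ord.
  by have := max_card (f @: setT :|: g @: setT); rewrite card_ord; lia.
case/card_gt0P=> _ /setIP[/imsetP[a _ ->] /imsetP[b _ /(congr1 val) /= eq_fg]].
exists a, b; rewrite /dvdn addnS -addn1 -(addnA (a ^ 2)) -modnDml.
rewrite -[(a ^ 2 + _) %% p]modnDm eq_fg modnDml.
have := ltn_pmod (b ^ 2 + d) p_gt0.
by rewrite (_ : _ + _ + 1 = p) ?modnn //; lia.
Qed.

Lemma coprime_mul_ind (P : nat -> Prop) :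
    (forall m1 m2, coprime m1 m2 -> P m1 -> P m2 -> P (m1 * m2)) ->
    (forall p e, prime p -> P (p ^ e)) ->
  forall m, 0 < m -> P m.
Proof.
move=> P_mul P_pow m; elim: m {-2}m (leqnn m) => [|N IH] m le_mN m_gt0; first lia.
have [m_le1|m_gt1] := leqP m 1.
  by rewrite (_ : m = 2 ^ 0); [apply: P_pow | rewrite expn0; lia].
have p_pr := pdiv_prime m_gt1; set p := pdiv m in p_pr.
rewrite -(partnC p m_gt0); apply: P_mul; first exact: coprime_partC.
  by rewrite p_part; apply: P_pow.
apply: IH; last exact: part_gt0.
have : 1 < m`_p by rewrite p_part_gt1 mem_primes p_pr m_gt0 pdiv_dvd.
by have := partnC p m_gt0; have := part_gt0 p^' m; nia.
Qed.

(* [qform] at the primitive vector [(1, a, b, c, 0, ..., 0)]. *)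
Definition qform4_root_mod (m : nat) : Prop :=
  exists a b c, m %| 2 + a ^ 2 + b ^ 2 + c ^ 2.

Lemma qform4_modn m a b c :
  2 + a ^ 2 + b ^ 2 + c ^ 2 = 2 + (a %% m) ^ 2 + (b %% m) ^ 2 + (c %% m) ^ 2 %[mod m].
Proof.
rewrite -modnDm -[RHS]modnDm modnXm; congr ((_ + _) %% m).
rewrite -modnDm -[RHS]modnDm modnXm; congr ((_ + _) %% m).
by rewrite -modnDmr -[RHS]modnDmr modnXm.
Qed.

Lemma qform4_root_mod_mul m1 m2 : coprime m1 m2 ->
  qform4_root_mod m1 -> qform4_root_mod m2 -> qform4_root_mod (m1 * m2).
Proof.
move=> co_m12 [a1 [b1 [c1 dvd1]]] [a2 [b2 [c2 dvd2]]].
exists (chinese m1 m2 a1 a2), (chinese m1 m2 b1 b2), (chinese m1 m2 c1 c2).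
rewrite Gauss_dvd // /dvdn (qform4_modn m1) (qform4_modn m2).
by rewrite !chinese_modl // !chinese_modr // -!qform4_modn -!/(dvdn _ _) dvd1 dvd2.
Qed.

Lemma qform4_root_mod_prime_pow p e : prime p -> qform4_root_mod (p ^ e).
Proof.
move=> p_pr; have [->|p_odd] := even_prime p_pr.
  have lift k a : odd a -> 2 ^ (k + 3) %| a ^ 2 + 7 ->
      exists2 a', odd a' & 2 ^ (k + 3).+1 %| a' ^ 2 + 7.
    by rewrite addn3; apply: sqr_add_lift_two.
  have [a dvd_a] := dvdn_pow_lift lift (isT : odd 1) (dvdnn _) e.
  by exists a, 2, 1; rewrite (_ : 2 + a ^ 2 + 2 ^ 2 + 1 ^ 2 = a ^ 2 + 7) //; ring.
have [a [b dvd_ab]] := exists_sqr_add_sqr_dvd 1 p_pr p_odd.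
wlog p_ndvd_a : a b dvd_ab / ~~ (p %| a).
  move=> sym; have [p_dvd_a|] := boolP (p %| a); last exact: sym dvd_ab.
  apply: (sym b a); first by rewrite (addnC (b ^ 2)).
  apply: contraL p_odd => p_dvd_b; move: dvd_ab.
  by rewrite dvdn_addr ?dvdn_add ?dvdn_exp // dvdn_prime2 // => /eqP->.
have lift k a' : ~~ (p %| a') -> p ^ (k + 1) %| a' ^ 2 + (b ^ 2 + 2) ->
    exists2 a'', ~~ (p %| a'') & p ^ (k + 1).+1 %| a'' ^ 2 + (b ^ 2 + 2).
  by rewrite addn1; apply: sqr_add_lift_odd.
have dvd_ab' : p ^ 1 %| a ^ 2 + (b ^ 2 + 2) by rewrite expn1 addnA.
have [a' dvd_a'] := dvdn_pow_lift lift p_ndvd_a dvd_ab' e.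
exists a', b, 0.
by rewrite addn0 (_ : 2 + a' ^ 2 + b ^ 2 = a' ^ 2 + (b ^ 2 + 2)) //; ring.
Qed.

Lemma qform4_root_mod_pos m : 0 < m -> qform4_root_mod m.
Proof.
apply: coprime_mul_ind; first exact: qform4_root_mod_mul.
exact: qform4_root_mod_prime_pow.
Qed.

Local Open Scope ring_scope.

Lemma qform_eq0 n (x : 'I_n -> int) : qform x = 0 <-> forall i, x i = 0.
Proof.
have qform_term_ge0 i : 0 <= (if val i == 0%N then 2 else 1) * x i ^+ 2.
  by rewrite mulr_ge0 ?sqr_ge0 //; case: ifP.
split=> [/eqP | x0]; last by rewrite /qform big1 // => i _; rewrite x0 expr0n mulr0.
rewrite /qform psumr_eq0 // => /allP x0 i; move: (x0 i (mem_index_enum i)).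
by rewrite mulf_eq0 sqrf_eq0; case: ifP => _ /orP[] // /eqP.
Qed.

Lemma qform_nth4 m (a b c : int) :
  qform (fun i : 'I_m.+4 => [:: 1; a; b; c]`_i) = 2 + a ^+ 2 + b ^+ 2 + c ^+ 2.
Proof.
rewrite /qform !big_ord_recl big1 => [|i _]; last by rewrite /= nth_nil expr0n mulr0.
by rewrite /= !mul1r expr1n mulr1 addr0 !addrA.
Qed.

Theorem proposition4p1
  (B : zmodType) (V : Type) (Bv : V -> finZmodType)
  (r : forall v : V, {additive B -> Bv v})
  (V_infinite : exists g : nat -> V, injective g)
  (n : nat) (hn : (4 <= n)%N)
  (P : B) (P_inf : forall k : int, k != 0 -> P *~ k != 0) :
  (forall x : 'I_n -> int, P *~ qform x = 0 <-> (forall i, x i = 0)) /\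
  (forall v : V, exists x : 'I_n -> int,
      gcd_all x = 1 /\ r v (P *~ qform x) = 0).
Proof.
split=> [x | v].
  rewrite -qform_eq0; split=> [|->]; last by rewrite mulr0z.
  by apply: contra_eq; apply: P_inf.
have [m ->] : exists m, n = m.+4 by exists (n - 4)%N; lia.
have rP_order : r v P *+ #[r v P]%g = 0 by rewrite -FinRing.zmodXgE expg_order.
have [a [b [c /dvdnP[s def_s]]]] := qform4_root_mod_pos (order_gt0 (r v P)).
exists (fun i => [:: 1; a%:Z; b%:Z; c%:Z]`_i); split.
  by rewrite /gcd_all big_ord_recl gcd1z.
rewrite qform_nth4 raddfMz.
have -> : 2 + a%:Z ^+ 2 + b%:Z ^+ 2 + c%:Z ^+ 2 = (#[r v P]%g * s)%N%:Z.
  by rewrite mulnC -def_s; lia.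
by rewrite -pmulrn mulrnA rP_order mul0rn.
Qed.
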